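(* Let $v$ be an additive valuation with nonnegative item values shared by $n$ agents, and items $g_1,\dots,g_T$ on a line. For $t\in[T]$ let $B_t=\frac1n v(M_t)-\frac{n-1}{n}\max_{g\in M_t}v(g)$ and $B_t^{\max}=\max_{s\in[t]}B_s$. Then for every $t\in[T]$ there exists a contiguous allocation $A$ of $M_t$ with $\min_{i\in[n]}v(A_i)\ge B^{\max}_t$; letting $X^t$ be the one among these whose vector $\ell(A)=(\ell(A_1),\dots,\ell(A_{n-1}))$ is lexicographically minimum, we have $\ell(X^t_i)\le \ell(X^{t+1}_i)$ for all $t<T$ and $i<n$.
   Context: $M_t=\{g_1,\dots,g_t\}$, $M_{l,r}=\{g_{l+1},\dots,g_r\}$. A contiguous allocation of $M_t$ is $(A_1,\dots,A_n)$ with $A_i=M_{p_{i-1},p_i}$ for some $0=p_0\le p_1\le\dots\le p_{n-1}\le p_n=t$; $\ell(A_i)=p_i$ denotes the index of the last item of block $i$ (with the convention that it equals $p_i$ even if the block is empty). It is a known result (Suksompong) that for additive valuations on a line there always exists a contiguous allocation with $v(A_i)\ge\frac1n v(M)-\frac{n-1}{n}\max_{g\in M}v(g)$ for all $i$. *)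

From mathcomp Require Import all_boot all_order all_algebra.
Set Implicit Arguments. Unset Strict Implicit. Unset Printing Implicit Defensive.
Import Order.TTheory GRing.Theory Num.Theory.
Local Open Scope ring_scope.

(* Items g_1..g_T are indexed by 1..T; [v k] is the value of item g_k.
   M_{l,r} = {g_(l+1),...,g_r}. *)
Definition valM {R : realFieldType} (v : nat -> R) (l r : nat) : R :=
  \sum_(l <= k < r) v k.+1.

(* max_{g in M_t} v(g)  (t >= 1 and values nonnegative, so base 0 is harmless) *)
Definition maxM {R : realFieldType} (v : nat -> R) (t : nat) : R :=
  \big[Num.max/0]_(0 <= k < t) v k.+1.

Definition Bt {R : realFieldType} (n : nat) (v : nat -> R) (t : nat) : R :=
  valM v 0 t / n%:R - (n.-1)%:R / n%:R * maxM v t.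

Definition Bmax {R : realFieldType} (n : nat) (v : nat -> R) (t : nat) : R :=
  \big[Num.max/Bt n v 1]_(1 <= s < t.+1) Bt n v s.

(* A contiguous allocation of M_t to n agents is given by its vector of
   end indices c = (l(A_1),...,l(A_{n-1})); the full boundary list is
   p = 0 :: c ++ [:: t]  (p_0 = 0, p_n = t), and A_i = M_{p_{i-1}, p_i}. *)
Definition bounds (t : nat) (c : seq nat) : seq nat := 0%N :: rcons c t.

Definition is_contig (n t : nat) (c : seq nat) : bool :=
  (size c == n.-1) && sorted leq (bounds t c).

(* value of block i (0-indexed, i < n), i.e. v(A_{i+1}) *)
Definition blockval {R : realFieldType} (v : nat -> R) (t : nat) (c : seq nat)
  (i : nat) : R :=
  valM v (nth 0%N (bounds t c) i) (nth 0%N (bounds t c) i.+1).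

Definition good {R : realFieldType} (n : nat) (v : nat -> R) (t : nat)
  (c : seq nat) : Prop :=
  is_contig n t c /\ (forall i, (i < n)%N -> Bmax n v t <= blockval v t c i).

Fixpoint lex_le (s1 s2 : seq nat) : bool :=
  match s1, s2 with
  | [::], _ => true
  | _ :: _, [::] => false
  | x :: s1', y :: s2' => (x < y)%N || ((x == y) && lex_le s1' s2')
  end.

Definition lexmin_good {R : realFieldType} (n : nat) (v : nat -> R) (t : nat)
  (c : seq nat) : Prop :=
  good n v t c /\ (forall d, good n v t d -> lex_le c d).

(* The existence part is Suksompong's greedy argument on the prefix M_s at
   which B^max_t is attained: as long as agents remain, cut the shortest
   block of value at least B_s; it is worth at most B_s + max_g v(g), and
   n B_s + (n-1) max_g v(g) = v(M_s) leaves enough value for the others.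
   For the monotonicity part, take the pointwise minimum e of the cut vectors
   of X^t and X^(t+1). Each block of e contains a block of X^t or of X^(t+1),
   hence is worth at least B^max_t, so e is a valid allocation of M_t. As e is
   pointwise below X^t and X^t is lexicographically minimum, X^t = e. *)
From Pilot Require Import Defs.
From mathcomp Require Import all_boot all_order all_algebra.
From mathcomp Require Import zify ring lra.
Import Order.TTheory GRing.Theory Num.Theory.
Local Open Scope ring_scope.

(* Unqualified, [valM] is MathComp's lemma on subtype multiplication. *)
Local Notation valM := Pilot.Defs.valM.

Lemma bigmax_nat_attained d (X : orderType d) (F : nat -> X) l h : (l < h)%N ->
  exists2 j, (l <= j < h)%N & \big[Order.max/F l]_(l <= i < h) F i = F j.
Proof.
move=> lt_lh; rewrite big_seq_cond.
apply: (big_ind (fun y => exists2 j, (l <= j < h)%N & y = F j)).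
- by exists l; rewrite ?leqnn.
- move=> _ _ [i hi ->] [j hj ->].
  by case: leP => _; [exists j | exists i].
- move=> i /andP[]; rewrite mem_index_iota => hi _.
  by exists i.
Qed.

Lemma lex_le_all2_eq (s1 s2 : seq nat) :
  lex_le s1 s2 -> all2 leq s2 s1 -> s1 = s2.
Proof.
elim: s1 s2 => [|x s1 IH] [|y s2] //= /orP[lt_xy|/andP[/eqP <- le12]].
  by case/andP; lia.
by case/andP=> _ /(IH _ le12) ->.
Qed.

Lemma path_leq_last (x : nat) s : path leq x s -> all (leq^~ (last x s)) (x :: s).
Proof.
elim: s x => [|y s IH] x /=; first by rewrite leqnn.
by case/andP=> le_xy /IH /= /andP[le_y ->]; rewrite (leq_trans le_xy le_y) le_y.
Qed.

Definition minseq (s1 s2 : seq nat) : seq nat :=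
  [seq minn p.1 p.2 | p <- zip s1 s2].

Lemma size_minseq s1 s2 : size s1 = size s2 -> size (minseq s1 s2) = size s1.
Proof. by move=> eq_sz; rewrite size_map size_zip eq_sz minnn. Qed.

Lemma minseq_rcons s1 s2 x y : size s1 = size s2 ->
  minseq (rcons s1 x) (rcons s2 y) = rcons (minseq s1 s2) (minn x y).
Proof. by move=> eq_sz; rewrite /minseq zip_rcons // map_rcons. Qed.

Lemma nth_minseq s1 s2 i : size s1 = size s2 -> (i < size s1)%N ->
  nth 0%N (minseq s1 s2) i = minn (nth 0%N s1 i) (nth 0%N s2 i).
Proof.
by move=> eq_sz lt_i; rewrite (nth_map (0, 0)%N) ?nth_zip // size_zip eq_sz minnn -eq_sz.
Qed.

Lemma all2_minseq s1 s2 : size s1 = size s2 -> all2 leq (minseq s1 s2) s1.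
Proof.
elim: s1 s2 => [|x s1 IH] [|y s2] //= [/IH ->].
by rewrite geq_minl.
Qed.

Definition cut_rel {R : realFieldType} (v : nat -> R) (B : R) : rel nat :=
  fun a b => (a <= b)%N && (B <= valM v a b).

Section Cuts.
Context {R : realFieldType} {T : nat} {v : nat -> R}.
Hypothesis v_ge0 : forall k, (1 <= k <= T)%N -> 0 <= v k.

Lemma valM_ge0 l r : (r <= T)%N -> 0 <= valM v l r.
Proof.
move=> le_rT; rewrite /valM big_nat_cond.
by apply: sumr_ge0 => k /andP[/andP[_ lt_kr] _]; apply: v_ge0; lia.
Qed.

Lemma valM_split l m r : (l <= m <= r)%N -> valM v l r = valM v l m + valM v m r.
Proof. by case/andP=> le_lm le_mr; rewrite /valM (big_cat_nat le_lm le_mr). Qed.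

Lemma valM_sub l l' r' r : (l <= l' <= r')%N -> (r' <= r <= T)%N ->
  valM v l' r' <= valM v l r.
Proof.
move=> /andP[le_ll' le_l'r'] /andP[le_r'r le_rT].
rewrite (@valM_split l l' r) ?le_ll' ?(leq_trans le_l'r') //.
rewrite (@valM_split l' r' r) ?le_l'r' //.
have := valM_ge0 l l' (leq_trans le_l'r' (leq_trans le_r'r le_rT)).
have := valM_ge0 r' r le_rT.
lra.
Qed.

Lemma valM_recr l r : (l <= r)%N -> valM v l r.+1 = valM v l r + v r.+1.
Proof. by move=> le_lr; rewrite /valM big_nat_recr. Qed.

Lemma shortest_prefix l r B m : (l <= r)%N -> 0 <= B + m ->
  (forall j, (l < j <= r)%N -> v j <= m) -> B <= valM v l r ->
  exists2 p, (l <= p <= r)%N & B <= valM v l p <= B + m.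
Proof.
move=> le_lr Bm_ge0 le_m B_le_r.
have ex_p : exists p, (l <= p)%N && (B <= valM v l p) by exists r; rewrite le_lr.
case: (ex_minnP ex_p) => p /andP[le_lp B_le_p] p_min.
have le_pr : (p <= r)%N by apply: p_min; rewrite le_lr.
exists p; first by rewrite le_lp.
rewrite B_le_p /=.
case: (ltngtP l p) le_lp => // [lt_lp|<-] _; last by rewrite /valM big_geq.
move: p_min le_pr {B_le_p}; case: p lt_lp => // q; rewrite ltnS => le_lq p_min le_qr.
have lt_qB : valM v l q < B.
  rewrite ltNge; apply/negP => B_le_q.
  by have := p_min q; rewrite le_lq B_le_q ltnn => /(_ isT).
have := le_m q.+1; rewrite ltnS le_lq le_qr => /(_ isT) le_vm.
by rewrite valM_recr //; lra.
Qed.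

Lemma greedy_cuts k l r r' B m : (l <= r <= r')%N -> (r' <= T)%N ->
  0 <= B + m -> (forall j, (l < j <= r)%N -> v j <= m) ->
  k.+1%:R * B + k%:R * m <= valM v l r ->
  exists2 c, size c = k & path (cut_rel v B) l (rcons c r').
Proof.
move=> + le_r'T Bm_ge0; elim: k l => [|k IH] l /andP[le_lr le_rr'] le_m enough.
  exists [::] => //=; rewrite andbT /cut_rel (leq_trans le_lr le_rr') /=.
  apply: (le_trans _ (@valM_sub l l r r' _ _)); rewrite ?leqnn ?le_lr ?le_rr' //.
  by move: enough; rewrite mul1r mul0r addr0.
have k_ge0 : 0 <= k%:R :> R by rewrite ler0n.
have B_le_r : B <= valM v l r.
  by move: enough; rewrite -!natr1 !mulrDl !mul1r; nra.
have [p /andP[le_lp le_pr] /andP[B_le_p p_le]] :=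
  @shortest_prefix l r B m le_lr Bm_ge0 le_m B_le_r.
have [c size_c path_c] : exists2 c, size c = k & path (cut_rel v B) p (rcons c r').
  apply: IH; first by rewrite le_pr le_rr'.
    move=> j /andP[lt_pj le_jr].
    by apply: le_m; rewrite le_jr (leq_ltn_trans le_lp lt_pj).
  by move: enough; rewrite (@valM_split l p r) ?le_lp // -!natr1 !mulrDl !mul1r; lra.
by exists (p :: c); rewrite /= ?size_c // path_c /cut_rel le_lp B_le_p.
Qed.

Lemma cut_rel_minn B x y x' y' : (minn x' y' <= T)%N ->
  cut_rel v B x x' -> cut_rel v B y y' -> cut_rel v B (minn x y) (minn x' y').
Proof.
rewrite /cut_rel => le_T /andP[le_xx' B_le_x] /andP[le_yy' B_le_y].
rewrite leq_min !geq_min le_xx' le_yy' orbT /=.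
case: (leqP x' y') le_T => [le_x'y'|lt_y'x'] le_T.
  apply: (le_trans B_le_x (@valM_sub (minn x y) x x' x' _ _));
  by rewrite ?geq_minl ?le_xx' ?leqnn ?(minn_idPl le_x'y') in le_T *.
apply: (le_trans B_le_y (@valM_sub (minn x y) y y' y' _ _));
by rewrite ?geq_minr ?le_yy' ?leqnn ?(minn_idPr (ltnW lt_y'x')) in le_T *.
Qed.

Lemma path_cut_rel_minseq B x y s1 s2 : size s1 = size s2 ->
  all (leq^~ T) s2 -> path (cut_rel v B) x s1 -> path (cut_rel v B) y s2 ->
  path (cut_rel v B) (minn x y) (minseq s1 s2).
Proof.
elim: s1 s2 x y => [|x' s1 IH] [|y' s2] //= x y [eq_sz] /andP[le_y'T le_s2T].
case/andP=> cut_x path_s1 /andP[cut_y path_s2].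
by rewrite cut_rel_minn ?IH // (leq_trans (geq_minr _ _) le_y'T).
Qed.

End Cuts.

Section Allocations.
Context {R : realFieldType} {n T : nat} {v : nat -> R}.
Hypothesis n_gt0 : (0 < n)%N.
Hypothesis v_ge0 : forall k, (1 <= k <= T)%N -> 0 <= v k.

Lemma maxM_ge k s : (0 < k <= s)%N -> v k <= maxM v s.
Proof.
move=> k_in; rewrite /maxM -(prednK (proj1 (andP k_in))).
by apply: le_bigmax_seq => //; rewrite mem_index_iota; lia.
Qed.

Lemma maxM_ge0 s : 0 <= maxM v s.
Proof. exact: bigmax_ge_id. Qed.

Lemma Bt_maxM_valM s : n%:R * Bt n v s + n.-1%:R * maxM v s = valM v 0 s.
Proof.
have n_neq0 : n%:R != 0 :> R by rewrite pnatr_eq0 -lt0n.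
by rewrite /Bt; field.
Qed.

Lemma Bmax_le_succ t : Bmax n v t <= Bmax n v t.+1.
Proof. exact: le_bigmax_nat. Qed.

Lemma good_path t c : good n v t c <->
  size c = n.-1 /\ path (cut_rel v (Bmax n v t)) 0 (rcons c t).
Proof.
have size_rc : size c = n.-1 -> size (rcons c t) = n by rewrite size_rcons => ->; lia.
rewrite /good /is_contig /cut_rel /blockval /bounds path_relI /=.
split=> [[/andP[/eqP size_c ->] B_le]|[size_c /andP[-> /(pathP 0%N) B_le]]].
  by split=> //; apply/(pathP 0%N) => i; rewrite size_rc //; apply: B_le.
by rewrite size_c eqxx; split=> // i lt_in; apply: B_le; rewrite size_rc.
Qed.

Lemma exists_good t : (1 <= t <= T)%N -> exists c, good n v t c.
Proof.
move=> /andP[t_gt0 le_tT].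
have [s /andP[s_gt0 lt_st] Bmax_t] : exists2 s, (1 <= s < t.+1)%N & Bmax n v t = Bt n v s.
  exact: bigmax_nat_attained.
have le_sT : (s <= T)%N by rewrite (leq_trans _ le_tT) // -ltnS.
have cover : n.-1.+1%:R * Bt n v s + n.-1%:R * maxM v s = valM v 0 s.
  by rewrite prednK // Bt_maxM_valM.
have Bm_ge0 : 0 <= Bt n v s + maxM v s.
  have := valM_ge0 v_ge0 0 s le_sT; have := maxM_ge0 s.
  have : 0 <= n.-1%:R :> R by rewrite ler0n.
  by move: cover; rewrite -natr1 mulrDl mul1r; nra.
have [c size_c path_c] :
    exists2 c, size c = n.-1 & path (cut_rel v (Bt n v s)) 0 (rcons c t).
  apply: (greedy_cuts v_ge0 _ _ _ _ _ _ _ le_tT Bm_ge0) => [|j|]; last by rewrite cover.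
    by rewrite -ltnS.
  exact: maxM_ge.
by exists c; apply/good_path; rewrite Bmax_t.
Qed.

Lemma lexmin_good_minseq t c d : (t < T)%N ->
  lexmin_good n v t c -> lexmin_good n v t.+1 d -> c = minseq c d.
Proof.
move=> lt_tT [/good_path[size_c path_c] c_min] [/good_path[size_d path_d] _].
have eq_sz : size c = size d by rewrite size_c size_d.
have path_d' : path (cut_rel v (Bmax n v t)) 0 (rcons d t.+1).
  apply: sub_path path_d => a b /andP[le_ab le_B].
  by rewrite /cut_rel le_ab (le_trans (Bmax_le_succ t) le_B).
have d_le_T : all (leq^~ T) (rcons d t.+1).
  have /path_leq_last : path leq 0 (rcons d t.+1) by apply: sub_path path_d => a b /andP[].
  rewrite last_rcons /=; apply: sub_all => x le_x.
  exact: leq_trans le_x lt_tT.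
have e_good : good n v t (minseq c d).
  apply/good_path; split; first by rewrite size_minseq.
  have eq_sz' : size (rcons c t) = size (rcons d t.+1) by rewrite !size_rcons eq_sz.
  have := path_cut_rel_minseq v_ge0 _ 0 0 _ _ eq_sz' d_le_T path_c path_d'.
  by rewrite minseq_rcons // (minn_idPl (leqnSn t)).
by apply: lex_le_all2_eq; [exact: c_min | exact: all2_minseq].
Qed.

End Allocations.

Theorem mainTheorem2 (R : realFieldType) (n T : nat) (v : nat -> R)
  (hn : (0 < n)%N)
  (hv : forall k, (1 <= k <= T)%N -> 0 <= v k) :
  (forall t, (1 <= t <= T)%N -> exists c, good n v t c) /\
  (forall t, (1 <= t < T)%N -> forall c d : seq nat,
     lexmin_good n v t c -> lexmin_good n v t.+1 d ->
     forall i, (i < n.-1)%N -> (nth 0 c i <= nth 0 d i)%N).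
Proof.
split=> [t|t /andP[_ lt_tT] c d X_t X_succ i lt_i].
  exact: exists_good hn hv t.
have [[/(good_path hn)[size_c _] _] [/(good_path hn)[size_d _] _]] := (X_t, X_succ).
rewrite (lexmin_good_minseq hn hv _ _ _ lt_tT X_t X_succ) nth_minseq ?geq_minr //.
  by rewrite size_c size_d.
by rewrite size_c.
Qed.
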